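(* Consider the reflected geometric Brownian motion (RGBM) model, in which the bank account is $B_t=\mathrm{e}^{rt}$ with $r\geq 0$ and the stock price $S$ solves $\mathrm{d}S_t=\mu S_t\,\mathrm{d}t+\sigma S_t\,\mathrm{d}W_t+\mathrm{d}L_t$ with lower reflecting boundary $b>0$ (where $L$ is the reflection term). Let the European put price with strike $K\geq b$ and maturity $T$ be given, for $(t,S)\in[0,T]\times[b,\infty)$, by the published RGBM put pricing formula \[ \begin{split} P(t,S)&=K\mathrm{e}^{-r(T-t)}\Phi\bigl(-z_1+\sigma\sqrt{T-t}\bigr)-b\mathrm{e}^{-r(T-t)}\Phi(z_4)-S\bigl(\Phi\bigl(-z_4+\sigma\sqrt{T-t}\bigr)-\Phi(z_1)\bigr)\\ &\quad-\frac{1}{\theta}\Bigl(S\bigl(\tfrac{b}{S}\bigr)^{1+\theta}\bigl(\Phi\bigl(z_4+\theta\sigma\sqrt{T-t}\bigr)-\Phi(z_3)\bigr)-b\mathrm{e}^{-r(T-t)}\Phi(z_4)+K\mathrm{e}^{-r(T-t)}\bigl(\tfrac{K}{b}\bigr)^{\theta-1}\Phi\bigl(z_3-\theta\sigma\sqrt{T-t}\bigr)\Bigr), \end{split} \] where $z_1=\frac{\ln\frac{S}{K}+(r+\frac12\sigma^2)(T-t)}{\sigma\sqrt{T-t}}$, $z_3=\frac{\ln\frac{b^2}{KS}+(r+\frac12\sigma^2)(T-t)}{\sigma\sqrt{T-t}}$, $z_4=\frac{\ln\frac{b}{S}-(r-\frac12\sigma^2)(T-t)}{\sigma\sqrt{T-t}}$,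 $\theta=\frac{2r}{\sigma^2}$, and $\Phi$ is the standard normal cumulative distribution function. Then the put price obtained from this formula violates the model-independent lower bound $P(t,S)\geq K\mathrm{e}^{-r(T-t)}-S$ (which must hold for all $(t,S)\in[0,T]\times[b,\infty)$ whenever an equivalent risk-neutral probability measure exists) under certain parameter regimes, when the stock price is close to the reflecting boundary $b$.
   Context: The lower bound $P(t,S)\geq \mathrm{E}^{\mathbb{Q}}_{t,S}(\mathrm{e}^{-r(T-t)}(K-S_T))\geq K\mathrm{e}^{-r(T-t)}-S$ follows if $\mathbb{Q}$ is an equivalent risk-neutral probability measure, since the discounted stock price is then a nonnegative $\mathbb{Q}$-local martingale and hence a $\mathbb{Q}$-supermartingale. $\Phi$ denotes the standard normal CDF. *)

From Stdlib Require Import Reals.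
From Coquelicot Require Import Coquelicot.
Open Scope R_scope.

Definition Phi (x : R) : R :=
  RInt_gen (fun u => exp (- u ^ 2 / 2) / sqrt (2 * PI))
           (Rbar_locally m_infty) (at_point x).

Definition rgbm_put (r sigma b K T t S : R) : R :=
  let tau := T - t in
  let st := sigma * sqrt tau in
  let theta := 2 * r / sigma ^ 2 in
  let D := exp (- r * tau) in
  let z1 := (ln (S / K) + (r + sigma ^ 2 / 2) * tau) / st in
  let z3 := (ln (b ^ 2 / (K * S)) + (r + sigma ^ 2 / 2) * tau) / st in
  let z4 := (ln (b / S) - (r - sigma ^ 2 / 2) * tau) / st in
  K * D * Phi (- z1 + st) - b * D * Phi z4
  - S * (Phi (- z4 + st) - Phi z1)
  - / theta * ( S * Rpower (b / S) (1 + theta) * (Phi (z4 + theta * st) - Phi z3)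
               - b * D * Phi z4
               + K * D * Rpower (K / b) (theta - 1) * Phi (z3 - theta * st)).

From Stdlib Require Import Reals Lra Classical.
From Coquelicot Require Import Coquelicot.
Open Scope R_scope.

(* Take r = 1/2, sigma = 1, b = 1, K = e, T = 1, t = 0, so that theta = 1.  At
   the barrier S = b the arguments z1, z3, z4 all vanish and the formula
   collapses to e^(1/2) (Phi 1 - Phi (-1)) - 2 (Phi 1 - Phi 0).  With
   A = Phi 1 - Phi 0 = Phi 0 - Phi (-1) (the density is even), the distance to
   the bound K e^(-r (T - t)) - b = e^(1/2) - 1 is (e^(1/2) - 1) (2 A - 1) < 0,
   since A <= 1/sqrt(2 pi) < 1/2.  Both sides are continuous in S, so the
   violation persists on a neighbourhood of b.  Continuity of Phi requires the
   improper integral defining it to exist, which follows from a monotone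
   bounded limit. *)

Lemma exp_le_compat (x y : R) : x <= y -> exp x <= exp y.
Proof.
  intros [Hlt | ->]; [apply Rlt_le, exp_increasing, Hlt | apply Rle_refl].
Qed.

Lemma RInt_even (f : R -> R) (a b : R) :
  (forall u, f (- u) = f u) -> ex_RInt f a b -> RInt f (- b) (- a) = RInt f a b.
Proof.
  intros Heven Hab.
  assert (Hab' : ex_RInt f (-1 * - a + 0) (-1 * - b + 0)).
  { replace (-1 * - a + 0) with a by ring. replace (-1 * - b + 0) with b by ring. exact Hab. }
  assert (Hopp : forall y, scal (-1) (f (-1 * y + 0)) = opp (f y)).
  { intros y. replace (-1 * y + 0) with (- y) by ring. rewrite Heven.
    unfold scal, opp; simpl; unfold mult; simpl. ring. }
  assert (Hex : ex_RInt f (- a) (- b)).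
  { apply (ex_RInt_ext (fun y => opp (opp (f y)))).
    - intros y _. apply opp_opp.
    - apply (ex_RInt_opp (V := R_NormedModule)).
      apply (ex_RInt_ext _ _ _ _ (fun y _ => Hopp y)).
      exact (ex_RInt_comp_lin f (-1) 0 (- a) (- b) Hab'). }
  rewrite <- (opp_RInt_swap (V := R_CompleteNormedModule)) by exact Hex.
  rewrite <- (RInt_opp (V := R_CompleteNormedModule)) by exact Hex.
  replace (RInt f a b) with (RInt f (-1 * - a + 0) (-1 * - b + 0)) by (f_equal; ring).
  rewrite <- (RInt_comp_lin f (-1) 0 (- a) (- b) Hab').
  apply RInt_ext. intros y _. symmetry. apply Hopp.
Qed.

Lemma ex_RInt_gen_m_infty_nonneg (f : R -> R) (x M : R) :
  (forall a, ex_RInt f a x) -> (forall u, u <= x -> 0 <= f u) ->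
  (forall a, a <= x -> RInt f a x <= M) ->
  ex_RInt_gen f (Rbar_locally m_infty) (at_point x).
Proof.
  intros Hint Hpos Hbound.
  set (E := fun y => exists a, a <= x /\ y = RInt f a x).
  assert (HE : exists y, E y) by (exists (RInt f x x), x; split; [lra | reflexivity]).
  assert (HEb : bound E) by (exists M; intros y [a [Ha ->]]; auto).
  destruct (completeness E HEb HE) as [l [Hub Hlub]].
  assert (Hmono : forall a a0, a <= a0 <= x -> RInt f a0 x <= RInt f a x).
  { intros a a0 Ha.
    assert (Haa0 : ex_RInt f a a0)
      by (apply (ex_RInt_Chasles_1 (V := R_CompleteNormedModule) f a a0 x); auto).
    rewrite <- (RInt_Chasles (V := R_CompleteNormedModule) f a a0 x) by auto.
    assert (0 <= RInt f a a0) by (apply RInt_ge_0; [lra | auto | intros; apply Hpos; lra]).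
    change (RInt f a0 x <= RInt f a a0 + RInt f a0 x). lra. }
  exists l. intros P [eps HP].
  assert (Happrox : exists a0, a0 <= x /\ l - eps < RInt f a0 x).
  { apply NNPP. intros Hno.
    assert (l <= l - eps).
    { apply Hlub. intros y [a [Ha ->]]. apply Rnot_lt_le. intros Hlt. apply Hno. eauto. }
    pose proof (cond_pos eps). lra. }
  destruct Happrox as [a0 [Ha0 Hl]].
  apply Filter_prod with (Q := fun a => a < a0) (R := fun b => b = x).
  - exists a0. auto.
  - reflexivity.
  - intros a b Ha Hb. simpl in Hb. subst b.
    exists (RInt f a x). split.
    + apply (RInt_correct (V := R_CompleteNormedModule)). auto.
    + apply HP. change (Rabs (RInt f a x - l) < eps).
      assert (RInt f a x <= l) by (apply Hub; exists a; split; [lra | reflexivity]).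
      pose proof (Hmono a a0 (conj (Rlt_le _ _ Ha) Ha0)).
      rewrite Rabs_left1; lra.
Qed.

Lemma continuous_lt_locally (f g : R -> R) (x : R) :
  continuous f x -> continuous g x -> f x < g x ->
  exists delta, 0 < delta /\ forall y, Rabs (y - x) < delta -> f y < g y.
Proof.
  intros Hf Hg Hlt.
  assert (Hfg : continuous (fun y => f y - g y) x)
    by exact (continuous_minus (V := R_NormedModule) f g x Hf Hg).
  assert (Hneg : f x - g x < 0) by lra.
  destruct (Hfg _ (open_lt 0 _ Hneg)) as [delta Hdelta].
  exists delta. split; [apply cond_pos |].
  intros y Hy. specialize (Hdelta y Hy). lra.
Qed.

Definition std_normal_pdf (u : R) : R := exp (- u ^ 2 / 2) / sqrt (2 * PI).

Lemma Phi_std_normal_pdf (x : R) :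
  Phi x = RInt_gen std_normal_pdf (Rbar_locally m_infty) (at_point x).
Proof. reflexivity. Qed.

Lemma sqrt_2PI_gt_2 : 2 < sqrt (2 * PI).
Proof.
  rewrite <- (sqrt_square 2) at 1 by lra.
  apply sqrt_lt_1; pose proof PI2_3_2; lra.
Qed.

Lemma std_normal_pdf_pos (u : R) : 0 < std_normal_pdf u.
Proof.
  apply Rdiv_lt_0_compat; [apply exp_pos | pose proof sqrt_2PI_gt_2; lra].
Qed.

Lemma std_normal_pdf_le_exp (u : R) : std_normal_pdf u <= exp (- u ^ 2 / 2).
Proof.
  pose proof sqrt_2PI_gt_2. pose proof (exp_pos (- u ^ 2 / 2)).
  unfold std_normal_pdf. apply Rle_div_l; [lra |]. nra.
Qed.

Lemma std_normal_pdf_le_inv_sqrt_2PI (u : R) : std_normal_pdf u <= / sqrt (2 * PI).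
Proof.
  pose proof sqrt_2PI_gt_2.
  unfold std_normal_pdf, Rdiv. rewrite <- (Rmult_1_l (/ sqrt _)) at 2.
  apply Rmult_le_compat_r; [apply Rlt_le, Rinv_0_lt_compat; lra |].
  rewrite <- exp_0. apply exp_le_compat. nra.
Qed.

Lemma std_normal_pdf_le_exp_shift (u : R) : std_normal_pdf u <= exp (u + 1).
Proof.
  eapply Rle_trans; [apply std_normal_pdf_le_exp | apply exp_le_compat; nra].
Qed.

Lemma std_normal_pdf_even (u : R) : std_normal_pdf (- u) = std_normal_pdf u.
Proof. unfold std_normal_pdf. replace ((- u) ^ 2) with (u ^ 2) by ring. reflexivity. Qed.

Lemma ex_derive_std_normal_pdf (u : R) : ex_derive std_normal_pdf u.
Proof. unfold std_normal_pdf. auto_derive. pose proof sqrt_2PI_gt_2. lra. Qed.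

Lemma ex_RInt_std_normal_pdf (a b : R) : ex_RInt std_normal_pdf a b.
Proof.
  apply (ex_RInt_continuous (V := R_CompleteNormedModule)). intros u _.
  apply (ex_derive_continuous (V := R_NormedModule)), ex_derive_std_normal_pdf.
Qed.

Lemma RInt_exp_shift_le (a x : R) : a <= x -> RInt (fun u => exp (u + 1)) a x <= exp (x + 1).
Proof.
  intros Hax.
  assert (Hderiv : forall u, is_derive (fun u => exp (u + 1)) u (exp (u + 1)))
    by (intros u; auto_derive; [auto | ring]).
  rewrite (is_RInt_unique _ _ _ _ (is_RInt_derive (V := R_CompleteNormedModule) _ _ a x
    (fun u _ => Hderiv u)
    (fun u _ => ex_derive_continuous (V := R_NormedModule) _ u (ex_intro _ _ (Hderiv u))))).
  pose proof (exp_pos (a + 1)). change (exp (x + 1) - exp (a + 1) <= exp (x + 1)). lra.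
Qed.

Lemma ex_RInt_gen_std_normal_pdf (x : R) :
  ex_RInt_gen std_normal_pdf (Rbar_locally m_infty) (at_point x).
Proof.
  apply (ex_RInt_gen_m_infty_nonneg _ x (exp (x + 1))).
  - intros a. apply ex_RInt_std_normal_pdf.
  - intros u _. apply Rlt_le, std_normal_pdf_pos.
  - intros a Hax. eapply Rle_trans; [| apply (RInt_exp_shift_le a x Hax)].
    apply RInt_le; auto using ex_RInt_std_normal_pdf.
    + apply (ex_RInt_continuous (V := R_CompleteNormedModule)). intros u _.
      apply (ex_derive_continuous (V := R_NormedModule)). auto_derive. auto.
    + intros u _. apply std_normal_pdf_le_exp_shift.
Qed.

Lemma Phi_Chasles (x y : R) : Phi y = Phi x + RInt std_normal_pdf x y.
Proof.
  rewrite !Phi_std_normal_pdf.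
  rewrite <- (RInt_gen_at_point (V := R_CompleteNormedModule)) by apply ex_RInt_std_normal_pdf.
  symmetry. apply (RInt_gen_Chasles std_normal_pdf x (ex_RInt_gen_std_normal_pdf x)).
  apply ex_RInt_gen_at_point, ex_RInt_std_normal_pdf.
Qed.

Lemma is_derive_Phi (x : R) : is_derive Phi x (std_normal_pdf x).
Proof.
  apply is_derive_ext with (fun y => Phi 0 + RInt std_normal_pdf 0 y);
    [intros y; symmetry; apply Phi_Chasles |].
  evar (d : R). replace (std_normal_pdf x) with d.
  - apply (is_derive_plus (V := R_NormedModule)); [apply is_derive_const |].
    apply (is_derive_RInt (V := R_CompleteNormedModule)
             std_normal_pdf (RInt std_normal_pdf 0) 0 x).
    + apply filter_forall. intros y.
      apply (RInt_correct (V := R_CompleteNormedModule)), ex_RInt_std_normal_pdf.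
    + apply (ex_derive_continuous (V := R_NormedModule)), ex_derive_std_normal_pdf.
  - unfold d, plus, zero; simpl. ring.
Qed.

Lemma ex_derive_Phi (x : R) : ex_derive Phi x.
Proof. eexists. apply is_derive_Phi. Qed.

Lemma Phi_symmetric_increments : Phi 0 - Phi (-1) = Phi 1 - Phi 0.
Proof.
  rewrite (Phi_Chasles 0 1), (Phi_Chasles (-1) 0).
  pose proof (RInt_even std_normal_pdf 0 1 std_normal_pdf_even (ex_RInt_std_normal_pdf 0 1))
    as Hsym.
  rewrite Ropp_0 in Hsym. replace (- (1)) with (-1) in Hsym by ring.
  rewrite Hsym. ring.
Qed.

Lemma Phi_increment_0_1_lt : Phi 1 - Phi 0 < 1 / 2.
Proof.
  pose proof sqrt_2PI_gt_2.
  assert (Hint : RInt std_normal_pdf 0 1 <= RInt (fun _ => / sqrt (2 * PI)) 0 1).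
  { apply RInt_le; [lra | apply ex_RInt_std_normal_pdf | apply ex_RInt_const |].
    intros u _. apply std_normal_pdf_le_inv_sqrt_2PI. }
  rewrite RInt_const in Hint.
  change (scal (1 - 0) (/ sqrt (2 * PI))) with ((1 - 0) * / sqrt (2 * PI)) in Hint.
  assert (/ sqrt (2 * PI) < / 2) by (apply Rinv_lt_contravar; lra).
  rewrite (Phi_Chasles 0 1). lra.
Qed.

Lemma rgbm_put_continuous (r sigma b K T t S : R) :
  0 < b -> 0 < K -> 0 < S -> continuous (rgbm_put r sigma b K T t) S.
Proof.
  intros Hb HK HS.
  apply (ex_derive_continuous (V := R_NormedModule)).
  unfold rgbm_put, Rpower. auto_derive.
  repeat split; try apply ex_derive_Phi;
    repeat first [ apply Rmult_lt_0_compat | apply Rinv_0_lt_compat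
                 | apply Rmult_integral_contrapositive_currified ];
    lra.
Qed.

Lemma rgbm_put_example_at_barrier :
  rgbm_put (1 / 2) 1 1 (exp 1) 1 0 1
  = exp (1 / 2) * (Phi 1 - Phi (-1)) - 2 * (Phi 1 - Phi 0).
Proof.
  assert (He : 0 < exp 1) by apply exp_pos.
  unfold rgbm_put, Rpower. cbv zeta.
  rewrite Rminus_0_r, sqrt_1.
  replace (2 * (1 / 2) / 1 ^ 2) with 1 by field.
  replace (1 / exp 1) with (exp (- (1))) by (rewrite exp_Ropp; field; lra).
  replace (1 ^ 2 / (exp 1 * 1)) with (exp (- (1))) by (rewrite exp_Ropp; field; lra).
  replace (exp 1 / 1) with (exp 1) by field.
  replace (1 / 1) with 1 by field.
  rewrite !ln_exp, ln_1.
  replace ((- (1) + (1 / 2 + 1 ^ 2 / 2) * 1) / (1 * 1)) with 0 by field.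
  replace ((0 - (1 / 2 - 1 ^ 2 / 2) * 1) / (1 * 1)) with 0 by field.
  replace (- 0 + 1 * 1) with 1 by ring.
  replace (0 + 1 * (1 * 1)) with 1 by ring.
  replace (0 - 1 * (1 * 1)) with (-1) by ring.
  replace ((1 + 1) * 0) with 0 by ring.
  replace ((1 - 1) * 1) with 0 by ring.
  replace (exp 1 * exp (- (1 / 2) * 1)) with (exp (1 / 2))
    by (rewrite <- exp_plus; f_equal; field).
  rewrite exp_0. field.
Qed.

Lemma rgbm_put_example_below_bound_at_barrier :
  rgbm_put (1 / 2) 1 1 (exp 1) 1 0 1 < exp 1 * exp (- (1 / 2) * (1 - 0)) - 1.
Proof.
  rewrite rgbm_put_example_at_barrier.
  replace (exp 1 * exp (- (1 / 2) * (1 - 0))) with (exp (1 / 2))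
    by (rewrite <- exp_plus; f_equal; field).
  pose proof Phi_symmetric_increments. pose proof Phi_increment_0_1_lt.
  assert (1 < exp (1 / 2)) by (rewrite <- exp_0 at 1; apply exp_increasing; lra).
  assert (0 < (exp (1 / 2) - 1) * (1 - 2 * (Phi 1 - Phi 0))) by (apply Rmult_lt_0_compat; lra).
  nra.
Qed.

Theorem proposition3p4 :
  exists r sigma b K T t : R,
    0 < r /\ 0 < sigma /\ 0 < b /\ b <= K /\ 0 <= t < T /\
    exists delta : R, 0 < delta /\
      forall S : R, b <= S < b + delta ->
        rgbm_put r sigma b K T t S < K * exp (- r * (T - t)) - S.
Proof.
  exists (1 / 2), 1, 1, (exp 1), 1, 0.
  destruct (continuous_lt_locally (rgbm_put (1 / 2) 1 1 (exp 1) 1 0)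
              (fun S => exp 1 * exp (- (1 / 2) * (1 - 0)) - S) 1)
    as [delta [Hdelta Hnear]].
  - apply rgbm_put_continuous; [lra | apply exp_pos | lra].
  - apply (continuous_minus (V := R_NormedModule)); [apply continuous_const | apply continuous_id].
  - exact rgbm_put_example_below_bound_at_barrier.
  - pose proof (exp_ineq1_le 1).
    repeat split; try lra.
    exists delta. split; [exact Hdelta |].
    intros S HS. apply Hnear. apply Rabs_def1; lra.
Qed.
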